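(* Let $\Gamma$ be a gain operator on $\ell^\infty_+(\mathcal I)$ and $\hat\Gamma(s):=s\oplus\Gamma(s)$. The following are equivalent: (a) the system $\Sigma(\hat\Gamma)$ is UGS; (b) there exists a path $\sigma:\mathbb R_+\to\ell^\infty_+(\mathcal I)$ with $\sigma(r)\in\Psi(\Gamma)$ for all $r\ge0$, with $\varphi_{\min}(r)\mathbf 1\le\sigma(r)\le\varphi_{\max}(r)\mathbf 1$ for all $r\ge 0$ for some $\varphi_{\min},\varphi_{\max}\in\mathcal K_\infty$, and which is increasing; (c) there exists a path $\sigma:\mathbb R_+\to\ell^\infty_+(\mathcal I)$ with $\sigma(r)\in\Psi(\Gamma)$ for all $r\ge0$ and $\varphi_{\min}(r)\mathbf 1\le\sigma(r)\le\varphi_{\max}(r)\mathbf 1$ for all $r\ge0$ for some $\varphi_{\min},\varphi_{\max}\in\mathcal K_\infty$; (d) the set $\Psi(\Gamma)$ is uniformly cofinal.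
   Context: Let $\mathcal I$ be a nonempty countable index set. $\ell^\infty(\mathcal I)$ is the Banach space of real families $s=(s_i)_{i\in\mathcal I}$ with $\|s\|:=\sup_i|s_i|<\infty$, and $\ell^\infty_+(\mathcal I):=\{s:s_i\ge0\ \forall i\}$. $s^1\le s^2$ means $s^1_i\le s^2_i$ for all $i$; $\mathbf 1$ is the all-ones vector; $s^1\oplus s^2$ is the componentwise maximum. $\mathcal K$: continuous strictly increasing $\gamma:\mathbb R_+\to\mathbb R_+$ with $\gamma(0)=0$; $\mathcal K_\infty$: unbounded elements of $\mathcal K$. For $\mathcal J\subset\mathcal I$, $s_{|\mathcal J}$ agrees with $s$ on $\mathcal J$ and is $0$ elsewhere. Gain operator: for each $i$ a finite (possibly empty) $\mathcal I_i\subset\mathcal I\setminus\{i\}$; graph $\mathcal G$ with vertices $\mathcal I$ and edges $ji$, $j\in\mathcal I_i$; a pointwise equicontinuous family $\gamma_{ij}\in\mathcal K_\infty$ ($ji\in E(\mathcal G)$); functions $\mu_i:\ell^\infty_+(\mathcal I)\to[0,\infty]$ with (M1) some $\xi\in\mathcal K_\infty$ has $\mu_i(0)=0$, $\mu_i(s)\ge\xi(\|s\|)$; (M2) $\mu_i$ monotone w.r.t. $\le$; (M3) for each finite $\mathcal J$, $\mu_i$ restricted to vectors vanishing off $\mathcal J$ is finite-valued and continuous; (M4) for each norm-bounded $A$ and $\varepsilon>0$ there is $\delta>0$ with $\sup_i|\mu_i(s_{|\mathcal I_i})-\mu_i(s^0_{|\mathcal I_i})|\le\varepsilon$ whenever $s^0\in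 A$, $\|s-s^0\|\le\delta$. Then $\Gamma_i(s):=\mu_i([\gamma_{ij}(s_j)]_{j\in\mathcal I_i})$ (argument zero outside $\mathcal I_i$). For a monotone $T:\ell^\infty_+(\mathcal I)\to\ell^\infty_+(\mathcal I)$ with $T(0)=0$, $\Sigma(T)$ is the system $s^{n+1}=T(s^n)$; it is UGS if there is $\varphi\in\mathcal K_\infty$ with $\|T^n(s)\|\le\varphi(\|s\|)$ for all $s$, $n\ge0$. $\Psi(T):=\{s\in\ell^\infty_+(\mathcal I):T(s)\le s\}$. A set $A\subset\ell^\infty_+(\mathcal I)$ is uniformly cofinal if there is $\varphi\in\mathcal K_\infty$ such that every $s\in\ell^\infty_+(\mathcal I)$ has some $\hat s\in A$ with $s\le\hat s$ and $\|\hat s\|\le\varphi(\|s\|)$. A path $\sigma$ is increasing if $r_1\le r_2\Rightarrow\sigma(r_1)\le\sigma(r_2)$. *)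

From Stdlib Require Import Reals List ClassicalDescription.
From Coquelicot Require Import Coquelicot.
Open Scope R_scope.

Definition cont_on_Rplus (g : R -> R) : Prop :=
  forall r, 0 <= r -> forall eps, 0 < eps -> exists delta, 0 < delta /\
    forall r', 0 <= r' -> Rabs (r' - r) < delta -> Rabs (g r' - g r) < eps.

Definition class_K (g : R -> R) : Prop :=
  cont_on_Rplus g /\ g 0 = 0 /\
  (forall r1 r2, 0 <= r1 -> r1 < r2 -> g r1 < g r2).

Definition class_Kinf (g : R -> R) : Prop :=
  class_K g /\ (forall M, exists r, 0 <= r /\ M < g r).

Definition countable_index (I : Type) : Prop :=
  exists f : I -> nat, forall i j, f i = f j -> i = j.

(* ||s|| := sup_i |s_i| (the value is meaningful for bounded s) *)
Definition linf_norm {I : Type} (s : I -> R) : R :=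
  real (Lub_Rbar (fun x => exists i, x = Rabs (s i))).

Definition linf {I : Type} (s : I -> R) : Prop := exists C, forall i, Rabs (s i) <= C.
Definition linf_pos {I : Type} (s : I -> R) : Prop := (forall i, 0 <= s i) /\ linf s.

Definition vle {I : Type} (s1 s2 : I -> R) : Prop := forall i, s1 i <= s2 i.
Definition ones {I : Type} : I -> R := fun _ => 1.
Definition vzero {I : Type} : I -> R := fun _ => 0.
Definition vmax {I : Type} (s1 s2 : I -> R) : I -> R := fun i => Rmax (s1 i) (s2 i).
Definition vscale {I : Type} (c : R) (s : I -> R) : I -> R := fun i => c * s i.
Definition vsub {I : Type} (s1 s2 : I -> R) : I -> R := fun i => s1 i - s2 i.

Definition restrict {I : Type} (J : list I) (s : I -> R) : I -> R :=
  fun j => if excluded_middle_informative (In j J) then s j else 0.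

Definition vanishes_off {I : Type} (J : list I) (s : I -> R) : Prop :=
  forall j, ~ In j J -> s j = 0.

(* Data: Ii i = the finite set I_i (as a list), gamma i j = gamma_ij (used for
   j in I_i, i.e. edges ji), mu i = mu_i : l^infty_+ -> [0, +oo]. *)
Definition gain_operator_data {I : Type} (Ii : I -> list I)
    (gamma : I -> I -> R -> R) (mu : I -> (I -> R) -> Rbar) : Prop :=
  (forall i, ~ In i (Ii i)) /\
  (forall i j, In j (Ii i) -> class_Kinf (gamma i j)) /\
  (forall r, 0 <= r -> forall eps, 0 < eps -> exists delta, 0 < delta /\
     forall i j r', In j (Ii i) -> 0 <= r' -> Rabs (r' - r) < delta ->
       Rabs (gamma i j r' - gamma i j r) < eps) /\
  (forall i s, linf_pos s -> Rbar_le (Finite 0) (mu i s)) /\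
  (exists xi, class_Kinf xi /\
     forall i, mu i vzero = Finite 0 /\
       forall s, linf_pos s -> Rbar_le (Finite (xi (linf_norm s))) (mu i s)) /\
  (forall i s1 s2, linf_pos s1 -> linf_pos s2 -> vle s1 s2 ->
     Rbar_le (mu i s1) (mu i s2)) /\
  (* (M3) *)
  (forall i (J : list I),
     (forall s, linf_pos s -> vanishes_off J s -> is_finite (mu i s)) /\
     (forall s, linf_pos s -> vanishes_off J s ->
        forall eps, 0 < eps -> exists delta, 0 < delta /\
          forall s', linf_pos s' -> vanishes_off J s' ->
            linf_norm (vsub s' s) < delta ->
            Rabs (real (mu i s') - real (mu i s)) < eps)) /\
  (* (M4) *)
  (forall A : (I -> R) -> Prop,
     (forall s, A s -> linf_pos s) ->
     (exists C, forall s, A s -> linf_norm s <= C) ->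
     forall eps, 0 < eps -> exists delta, 0 < delta /\
       forall s0 s, A s0 -> linf_pos s -> linf_norm (vsub s s0) <= delta ->
         forall i, Rabs (real (mu i (restrict (Ii i) s))
                         - real (mu i (restrict (Ii i) s0))) <= eps).

(* Gamma_i(s) := mu_i([gamma_ij(s_j)]_{j in I_i}) (argument zero outside I_i);
   this value is finite by (M3). *)
Definition Gamma_op {I : Type} (Ii : I -> list I) (gamma : I -> I -> R -> R)
    (mu : I -> (I -> R) -> Rbar) (s : I -> R) : I -> R :=
  fun i => real (mu i (restrict (Ii i) (fun j => gamma i j (s j)))).

Definition Gamma_hat {I : Type} (Ii : I -> list I) (gamma : I -> I -> R -> R)
    (mu : I -> (I -> R) -> Rbar) (s : I -> R) : I -> R :=
  vmax s (Gamma_op Ii gamma mu s).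

Definition UGS {I : Type} (T : (I -> R) -> (I -> R)) : Prop :=
  exists phi, class_Kinf phi /\
    forall s, linf_pos s -> forall n : nat,
      linf_norm (Nat.iter n T s) <= phi (linf_norm s).

Definition Psi {I : Type} (T : (I -> R) -> (I -> R)) (s : I -> R) : Prop :=
  linf_pos s /\ vle (T s) s.

Definition uniformly_cofinal {I : Type} (A : (I -> R) -> Prop) : Prop :=
  exists phi, class_Kinf phi /\
    forall s, linf_pos s -> exists shat, A shat /\ vle s shat /\
      linf_norm shat <= phi (linf_norm s).

Definition increasing_path {I : Type} (sigma : R -> I -> R) : Prop :=
  forall r1 r2, 0 <= r1 -> r1 <= r2 -> vle (sigma r1) (sigma r2).

Definition bounded_decay_path {I : Type} (T : (I -> R) -> (I -> R))
    (sigma : R -> I -> R) : Prop :=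
  (forall r, 0 <= r -> Psi T (sigma r)) /\
  exists phimin phimax, class_Kinf phimin /\ class_Kinf phimax /\
    forall r, 0 <= r ->
      vle (vscale (phimin r) ones) (sigma r) /\ vle (sigma r) (vscale (phimax r) ones).

From Stdlib Require Import Reals List Lra Lia.
From Stdlib Require Import Classical ClassicalDescription FunctionalExtensionality IndefiniteDescription.
From Coquelicot Require Import Coquelicot.
Open Scope R_scope.

(* (d) => (a): if s <= shat with Gamma(shat) <= shat, the monotonicity of Gamma keeps
   every iterate Ghat^n(s) below shat.
   (a) => (b): sigma(r) := sup_n Ghat^n(r 1) is increasing in r and lies between r 1 and
   phi(r) 1.  It is a decay point: Gamma(Ghat^n(r 1)) <= Ghat^(n+1)(r 1), and Gamma_i,
   which only sees the finitely many coordinates in I_i, is continuous along pointwise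
   limits by (M3).  For the orbit to stay in l^oo at all, Gamma must map l^oo_+ into
   itself; this comes from the equicontinuity of the gamma_ij together with (M4).
   (c) => (d): s <= sigma(phimin^-1 ||s||), whose norm is at most
   phimax(phimin^-1 ||s||), and phimax o phimin^-1 is again of class K_oo. *)

Lemma real_Lub_Rbar_spec (E : R -> Prop) x0 C :
  E x0 -> (forall x, E x -> x <= C) ->
  (forall x, E x -> x <= real (Lub_Rbar E)) /\
  (forall b, (forall x, E x -> x <= b) -> real (Lub_Rbar E) <= b).
Proof.
  intros H0 HC. destruct (Lub_Rbar_correct E) as [Hub Hlub].
  assert (HL : Rbar_le (Lub_Rbar E) C) by (apply Hlub; intros x Hx; simpl; auto).
  assert (HL0 := Hub x0 H0).
  destruct (Lub_Rbar E) as [l| |]; simpl in *; try contradiction.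
  split; [exact Hub|].
  intros b Hb. apply (Hlub (Finite b)). intros x Hx; simpl; auto.
Qed.

Definition seq_sup (u : nat -> R) : R := real (Lub_Rbar (fun v => exists n, v = u n)).

Section SeqSup.

Variables (u : nat -> R) (C : R).
Hypothesis u_bounded : forall n, u n <= C.

Lemma seq_sup_ub n : u n <= seq_sup u.
Proof.
  apply (real_Lub_Rbar_spec _ (u O) C); eauto. intros v [m ->]; auto.
Qed.

Lemma seq_sup_le b : (forall n, u n <= b) -> seq_sup u <= b.
Proof.
  intros Hb. apply (real_Lub_Rbar_spec _ (u O) C); eauto; intros v [m ->]; auto.
Qed.

Lemma seq_sup_cv_incr :
  (forall n, u n <= u (S n)) ->
  forall d, 0 < d -> exists N, forall m, (N <= m)%nat -> Rabs (u m - seq_sup u) < d.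
Proof.
  intros Hincr d Hd.
  assert (Hmono : forall n m, (n <= m)%nat -> u n <= u m).
  { intros n m Hnm. induction Hnm; [lra|]. specialize (Hincr m). lra. }
  assert (Hex : exists N, seq_sup u - d < u N).
  { apply NNPP. intros Hn. assert (seq_sup u <= seq_sup u - d); [|lra].
    apply seq_sup_le. intros n. apply Rnot_lt_le. intros Hlt. eauto. }
  destruct Hex as [N HN]. exists N. intros m Hm.
  pose proof (Hmono N m Hm). pose proof (seq_sup_ub m). apply Rabs_def1; lra.
Qed.

End SeqSup.

Section SupNorm.

Context {I : Type} (HI : inhabited I).

Lemma linf_norm_spec (s : I -> R) C :
  (forall i, Rabs (s i) <= C) ->
  (forall i, Rabs (s i) <= linf_norm s) /\ linf_norm s <= C.
Proof.
  intros HC. destruct HI as [i0]. unfold linf_norm.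
  destruct (real_Lub_Rbar_spec (fun x => exists i, x = Rabs (s i)) (Rabs (s i0)) C)
    as [Hub Hlub]; eauto.
  - intros x [i ->]; auto.
  - split.
    + intros i; apply Hub; eauto.
    + apply Hlub. intros x [i ->]; auto.
Qed.

Lemma linf_norm_le_bound (s : I -> R) C : (forall i, Rabs (s i) <= C) -> linf_norm s <= C.
Proof. intros H; apply (linf_norm_spec s C H). Qed.

Lemma linf_norm_ge_abs (s : I -> R) i : linf s -> Rabs (s i) <= linf_norm s.
Proof. intros [C HC]; apply (linf_norm_spec s C HC). Qed.

Lemma linf_pos_le_norm (s : I -> R) i : linf_pos s -> s i <= linf_norm s.
Proof. intros [_ Hs]. eapply Rle_trans; [apply Rle_abs|]. apply linf_norm_ge_abs, Hs. Qed.

Lemma linf_norm_le_of_nonneg (s : I -> R) C :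
  (forall i, 0 <= s i <= C) -> linf_norm s <= C.
Proof.
  intros Hs. apply linf_norm_le_bound. intros i. specialize (Hs i).
  rewrite Rabs_pos_eq; lra.
Qed.

Lemma linf_norm_nonneg (s : I -> R) : linf s -> 0 <= linf_norm s.
Proof.
  intros Hs. destruct HI as [i0].
  pose proof (linf_norm_ge_abs s i0 Hs). pose proof (Rabs_pos (s i0)). lra.
Qed.

Lemma linf_pos_const r : 0 <= r -> linf_pos (vscale r (@ones I)).
Proof.
  intros Hr. unfold vscale, ones. split; [intros i; lra|].
  exists r. intros i. rewrite Rmult_1_r, Rabs_pos_eq; lra.
Qed.

Lemma linf_norm_const r : 0 <= r -> linf_norm (vscale r (@ones I)) = r.
Proof.
  intros Hr. destruct HI as [i0]. apply Rle_antisym.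
  - apply linf_norm_le_of_nonneg. intros i; unfold vscale, ones; lra.
  - replace r with (vscale r (@ones I) i0) at 1 by (unfold vscale, ones; ring).
    apply linf_pos_le_norm, linf_pos_const, Hr.
Qed.

Lemma vscale_box (v : I -> R) B c :
  (forall j, 0 <= v j <= B) -> 0 <= c <= 1 -> forall j, 0 <= vscale c v j <= B.
Proof. intros Hv Hc j. specialize (Hv j). unfold vscale. split; nra. Qed.

Lemma linf_norm_vscale_sub (v : I -> R) B c1 c2 :
  (forall j, 0 <= v j <= B) -> c1 <= c2 ->
  linf_norm (vsub (vscale c2 v) (vscale c1 v)) <= (c2 - c1) * B.
Proof.
  intros Hv Hc. apply linf_norm_le_of_nonneg. intros j. specialize (Hv j).
  unfold vsub, vscale. split; nra.
Qed.

End SupNorm.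

Section Monotone.

Variable h : R -> R.
Hypothesis h_incr : forall t1 t2, 0 <= t1 -> t1 < t2 -> h t1 < h t2.

Lemma incr_le t1 t2 : 0 <= t1 -> t1 <= t2 -> h t1 <= h t2.
Proof.
  intros H1 H12. destruct (Req_dec t1 t2) as [->|Hne]; [lra|].
  left; apply h_incr; lra.
Qed.

Lemma incr_lt_reflect t1 t2 : 0 <= t1 -> 0 <= t2 -> h t1 < h t2 -> t1 < t2.
Proof.
  intros H1 H2 Hlt. apply Rnot_le_lt. intros H21.
  pose proof (incr_le t2 t1 H2 H21). lra.
Qed.

Lemma incr_inj t1 t2 : 0 <= t1 -> 0 <= t2 -> h t1 = h t2 -> t1 = t2.
Proof.
  intros H1 H2 He. destruct (Rtotal_order t1 t2) as [Hl|[|Hl]]; auto.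
  - specialize (h_incr t1 t2 H1 Hl); lra.
  - specialize (h_incr t2 t1 H2 Hl); lra.
Qed.

(* A monotone function on [0, oo) whose range has no gaps cannot jump. *)
Lemma incr_onto_cont_on_Rplus :
  (forall t, 0 <= t -> 0 <= h t) ->
  (forall r, 0 <= r -> exists t, 0 <= t /\ h t = r) ->
  cont_on_Rplus h.
Proof.
  intros h_nonneg h_onto t0 Ht0 eps Heps.
  pose proof (h_nonneg t0 Ht0) as Hr0.
  destruct (h_onto (h t0 + eps)) as [t1 [Ht1 Hht1]]; [lra|].
  assert (Ht01 : t0 < t1) by (apply incr_lt_reflect; lra).
  destruct (Rlt_le_dec (h t0) eps) as [Hsmall|Hbig].
  - exists (t1 - t0). split; [lra|]. intros t' Ht' Hd. apply Rabs_def2 in Hd.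
    pose proof (h_incr t' t1 Ht' ltac:(lra)). pose proof (h_nonneg t' Ht').
    apply Rabs_def1; lra.
  - destruct (h_onto (h t0 - eps)) as [t2 [Ht2 Hht2]]; [lra|].
    assert (Ht20 : t2 < t0) by (apply incr_lt_reflect; lra).
    exists (Rmin (t1 - t0) (t0 - t2)). split; [apply Rmin_glb_lt; lra|].
    intros t' Ht' Hd. apply Rabs_def2 in Hd.
    pose proof (Rmin_l (t1 - t0) (t0 - t2)). pose proof (Rmin_r (t1 - t0) (t0 - t2)).
    pose proof (h_incr t' t1 Ht' ltac:(lra)). pose proof (h_incr t2 t' Ht2 ltac:(lra)).
    apply Rabs_def1; lra.
Qed.

End Monotone.

Lemma Kinf_incr g : class_Kinf g -> forall t1 t2, 0 <= t1 -> t1 < t2 -> g t1 < g t2.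
Proof. intros [[_ [_ Hi]] _]; exact Hi. Qed.

Lemma Kinf_le g r1 r2 : class_Kinf g -> 0 <= r1 -> r1 <= r2 -> g r1 <= g r2.
Proof. intros Hg; apply incr_le, Kinf_incr, Hg. Qed.

Lemma Kinf_nonneg g r : class_Kinf g -> 0 <= r -> 0 <= g r.
Proof.
  intros Hg Hr. replace 0 with (g 0) at 1 by apply Hg. apply (Kinf_le g); auto; lra.
Qed.

Lemma Kinf_id : class_Kinf (fun r => r).
Proof.
  split; [split; [|split]|].
  - intros r _ eps Heps. exists eps; split; auto.
  - reflexivity.
  - intros; lra.
  - intros M. exists (Rmax M 0 + 1). pose proof (Rmax_l M 0); pose proof (Rmax_r M 0). lra.
Qed.

Lemma cont_on_Rplus_continuity_pt g :
  cont_on_Rplus g -> forall x, continuity_pt (fun x => g (Rmax x 0)) x.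
Proof.
  intros Hg x eps Heps. destruct (Hg (Rmax x 0) (Rmax_r x 0) eps Heps) as [d [Hd Hgd]].
  exists d. split; auto. intros y [_ Hy]. simpl in *. unfold Rdist in *.
  apply Hgd; [apply Rmax_r|].
  eapply Rle_lt_trans; [|exact Hy]. unfold Rmax.
  destruct (Rle_dec y 0), (Rle_dec x 0); split_Rabs; lra.
Qed.

Lemma Kinf_onto g : class_Kinf g -> forall t, 0 <= t -> exists r, 0 <= r /\ g r = t.
Proof.
  intros Hg t Ht. pose proof Hg as [[Hc [H0 _]] Hunb].
  destruct (Req_dec t 0) as [->|Htne]; [exists 0; split; [lra|exact H0]|].
  destruct (Hunb t) as [R0 [HR0 HtR0]].
  assert (HR0pos : 0 < R0).
  { destruct (Req_dec R0 0) as [->|]; [rewrite H0 in HtR0; lra|lra]. }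
  destruct (Ranalysis5.IVT_interv (fun x => g (Rmax x 0) - t) 0 R0) as [z [Hz Hgz]]; auto.
  - intros a _. apply continuity_pt_minus; [|apply continuity_pt_const; intros ? ?; reflexivity].
    apply cont_on_Rplus_continuity_pt, Hc.
  - rewrite Rmax_left, H0 by lra. lra.
  - rewrite Rmax_left by lra. lra.
  - exists z. rewrite Rmax_left in Hgz by lra. split; lra.
Qed.

Lemma Kinf_inverse g : class_Kinf g ->
  exists h, class_Kinf h /\ forall t, 0 <= t -> 0 <= h t /\ g (h t) = t.
Proof.
  intros Hg.
  destruct (functional_choice (fun t r => 0 <= t -> 0 <= r /\ g r = t)) as [h Hh].
  { intros t. destruct (Rle_dec 0 t) as [Ht|Ht].
    - destruct (Kinf_onto g Hg t Ht) as [r Hr]. exists r; auto.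
    - exists 0; intros; lra. }
  exists h. split; [|exact Hh].
  assert (h_nonneg : forall t, 0 <= t -> 0 <= h t) by (intros t Ht; apply Hh, Ht).
  assert (h_cancel : forall r, 0 <= r -> h (g r) = r).
  { intros r Hr. pose proof (Kinf_nonneg g r Hg Hr) as Hgr.
    apply (incr_inj g (Kinf_incr g Hg)); auto. apply Hh, Hgr. }
  assert (h_incr : forall t1 t2, 0 <= t1 -> t1 < t2 -> h t1 < h t2).
  { intros t1 t2 H1 H12. destruct (Hh t1 H1) as [_ E1]. destruct (Hh t2 ltac:(lra)) as [_ E2].
    apply (incr_lt_reflect g (Kinf_incr g Hg)); auto; [apply h_nonneg; lra|lra]. }
  assert (h_onto : forall r, 0 <= r -> exists t, 0 <= t /\ h t = r).
  { intros r Hr. exists (g r). split; [apply Kinf_nonneg|apply h_cancel]; auto. }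
  split; [split; [|split]|].
  - apply incr_onto_cont_on_Rplus; auto.
  - replace 0 with (g 0) at 1 by apply Hg. apply h_cancel; lra.
  - exact h_incr.
  - intros M. destruct (h_onto (Rmax M 0 + 1)) as [t [Ht Hht]].
    + pose proof (Rmax_r M 0); lra.
    + exists t. pose proof (Rmax_l M 0). split; lra.
Qed.

Lemma Kinf_comp f g : class_Kinf f -> class_Kinf g -> class_Kinf (fun t => f (g t)).
Proof.
  intros Hf Hg. pose proof Hf as [[Hcf [Hf0 Hfi]] Hfu]. pose proof Hg as [[Hcg [Hg0 Hgi]] _].
  split; [split; [|split]|].
  - intros r Hr eps Heps.
    destruct (Hcf (g r) (Kinf_nonneg g r Hg Hr) eps Heps) as [d1 [Hd1 Hc1]].
    destruct (Hcg r Hr d1 Hd1) as [d [Hd Hc]]. exists d; split; auto.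
    intros r' Hr' Hrr. apply Hc1; auto. apply Kinf_nonneg; auto.
  - rewrite Hg0; auto.
  - intros r1 r2 H1 H2. apply Hfi; [apply Kinf_nonneg; auto|]. apply Hgi; auto.
  - intros M. destruct (Hfu M) as [r [Hr HM]]. destruct (Kinf_onto g Hg r Hr) as [t [Ht Htr]].
    exists t; split; auto. rewrite Htr; auto.
Qed.

Lemma Rplus_downward_locally_constant (P : R -> Prop) :
  P 0 ->
  (forall t1 t2, 0 <= t1 -> t1 <= t2 -> P t2 -> P t1) ->
  (forall t, 0 <= t -> exists d, 0 < d /\
     forall t', 0 <= t' -> Rabs (t' - t) < d -> (P t <-> P t')) ->
  forall r, 0 <= r -> P r.
Proof.
  intros P0 Pdown Ploc r Hr. apply NNPP. intros HnPr.
  set (E := fun t => 0 <= t /\ P t).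
  assert (HE : bound E).
  { exists r. intros t [Ht HPt]. apply Rnot_lt_le. intros Hrt.
    apply HnPr, (Pdown r t); auto; lra. }
  destruct (completeness E HE (ex_intro _ 0 (conj (Rle_refl 0) P0))) as [m [Hub Hlub]].
  assert (Hm : 0 <= m) by (apply Hub; split; [lra|exact P0]).
  destruct (Ploc m Hm) as [d [Hd Hloc]].
  assert (Hnear : exists t, E t /\ m - d < t).
  { apply NNPP. intros Hn. assert (m <= m - d); [|lra].
    apply Hlub. intros t Et. apply Rnot_lt_le. intros Hlt. apply Hn. eauto. }
  destruct Hnear as [t [[Ht HPt] Htm]].
  assert (t <= m) by (apply Hub; split; auto).
  assert (HPm : P m) by (apply (Hloc t); auto; rewrite Rabs_left1; lra).
  assert (HE' : E (m + d / 2)).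
  { split; [lra|]. apply (Hloc (m + d / 2)); auto; [lra|]. rewrite Rabs_pos_eq; lra. }
  assert (m + d / 2 <= m) by (apply Hub; auto). lra.
Qed.

Lemma bounded_increments_le (a : nat -> R) N c :
  a O <= 0 -> (forall k, (k < N)%nat -> a (S k) <= a k + c) -> a N <= INR N * c.
Proof.
  intros H0 Hstep. induction N as [|N IH].
  - simpl; lra.
  - rewrite S_INR.
    assert (a N <= INR N * c) by (apply IH; intros k Hk; apply Hstep; lia).
    specialize (Hstep N (Nat.lt_succ_diag_r N)). lra.
Qed.

Section Restrict.

Context {I : Type} (J : list I).

Lemma restrict_vanishes_off (f : I -> R) : vanishes_off J (restrict J f).
Proof.
  intros j Hj. unfold restrict. destruct (excluded_middle_informative (In j J)); tauto.
Qed.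

Lemma restrict_idem (f : I -> R) : restrict J (restrict J f) = restrict J f.
Proof.
  apply functional_extensionality; intros j. unfold restrict.
  destruct (excluded_middle_informative (In j J)); auto.
Qed.

Lemma restrict_linf (f : I -> R) : linf (restrict J f).
Proof.
  set (C := fold_right (fun j acc => Rabs (f j) + acc) 0 J).
  assert (HC : forall K, 0 <= fold_right (fun j acc => Rabs (f j) + acc) 0 K).
  { induction K as [|a K IH]; simpl; [lra|]. pose proof (Rabs_pos (f a)); lra. }
  exists C. intros i. unfold restrict.
  destruct (excluded_middle_informative (In i J)) as [Hin|Hout].
  - unfold C. clear -Hin HC. induction J as [|a K IH]; simpl in *; [contradiction|].
    destruct Hin as [->|Hin].
    + specialize (HC K); lra.
    + specialize (IH Hin). pose proof (Rabs_pos (f a)); lra.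
  - rewrite Rabs_R0. apply HC.
Qed.

Lemma restrict_linf_pos (f : I -> R) :
  (forall j, In j J -> 0 <= f j) -> linf_pos (restrict J f).
Proof.
  intros Hf. split; [|apply restrict_linf]. intros j. unfold restrict.
  destruct (excluded_middle_informative (In j J)); auto; lra.
Qed.

End Restrict.

Lemma eventually_forall_In {I : Type} (J : list I) (P : I -> nat -> Prop) :
  (forall j, In j J -> exists N, forall m, (N <= m)%nat -> P j m) ->
  exists N, forall j m, In j J -> (N <= m)%nat -> P j m.
Proof.
  induction J as [|a J IH]; intros H.
  - exists 0%nat; intros j m [].
  - destruct (H a (or_introl eq_refl)) as [Na Ha].
    destruct IH as [NJ HJ]; [intros j Hj; apply H; right; auto|].
    exists (Nat.max Na NJ). intros j m [<-|Hj] Hm.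
    + apply Ha; lia.
    + apply HJ; auto; lia.
Qed.

Lemma Gamma_hat_ge {I : Type} Ii gamma mu (s : I -> R) : vle s (Gamma_hat Ii gamma mu s).
Proof. intros i; apply Rmax_l. Qed.

Lemma iter_Gamma_hat_ge {I : Type} Ii gamma mu (s : I -> R) n :
  vle s (Nat.iter n (Gamma_hat Ii gamma mu) s).
Proof.
  induction n as [|n IH]; intros i; simpl; [lra|].
  eapply Rle_trans; [apply IH|apply Gamma_hat_ge].
Qed.

Section GainOperator.

Variables (I : Type) (HI : inhabited I).
Variables (Ii : I -> list I) (gamma : I -> I -> R -> R) (mu : I -> (I -> R) -> Rbar).
Hypothesis Hg : gain_operator_data Ii gamma mu.

Local Notation Gam := (Gamma_op Ii gamma mu).
Local Notation Ghat := (Gamma_hat Ii gamma mu).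

Definition gain_input i (s : I -> R) : I -> R := restrict (Ii i) (fun j => gamma i j (s j)).

Lemma gamma_Kinf i j : In j (Ii i) -> class_Kinf (gamma i j).
Proof. destruct Hg as (_ & HK & _). exact (HK i j). Qed.

Lemma gain_input_linf_pos i s : (forall j, 0 <= s j) -> linf_pos (gain_input i s).
Proof.
  intros Hs. apply restrict_linf_pos. intros j Hj. apply Kinf_nonneg; auto.
  apply gamma_Kinf, Hj.
Qed.

Lemma mu_gain_input i s : (forall j, 0 <= s j) -> mu i (gain_input i s) = Finite (Gam s i).
Proof.
  intros Hs. destruct Hg as (_ & _ & _ & _ & _ & _ & HM3 & _).
  symmetry. apply (proj1 (HM3 i (Ii i))).
  - apply gain_input_linf_pos, Hs.
  - apply restrict_vanishes_off.
Qed.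

Lemma Gamma_nonneg s i : (forall j, 0 <= s j) -> 0 <= Gam s i.
Proof.
  intros Hs. destruct Hg as (_ & _ & _ & Hmu0 & _).
  pose proof (Hmu0 i _ (gain_input_linf_pos i s Hs)) as H.
  rewrite mu_gain_input in H by exact Hs. exact H.
Qed.

Lemma Gamma_mono s1 s2 : (forall j, 0 <= s1 j) -> vle s1 s2 -> vle (Gam s1) (Gam s2).
Proof.
  intros H1 H12 i.
  assert (H2 : forall j, 0 <= s2 j) by (intros j; specialize (H1 j); specialize (H12 j); lra).
  destruct Hg as (_ & _ & _ & _ & _ & HM2 & _).
  pose proof (HM2 i _ _ (gain_input_linf_pos i s1 H1) (gain_input_linf_pos i s2 H2)) as H.
  rewrite !mu_gain_input in H by assumption. apply H.
  intros j. unfold gain_input, restrict.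
  destruct (excluded_middle_informative (In j (Ii i))) as [Hj|]; [|lra].
  apply Kinf_le; auto. apply gamma_Kinf, Hj.
Qed.

Lemma Gamma_hat_mono s1 s2 : (forall j, 0 <= s1 j) -> vle s1 s2 -> vle (Ghat s1) (Ghat s2).
Proof.
  intros H1 H12 i. pose proof (Gamma_mono s1 s2 H1 H12 i). specialize (H12 i).
  apply Rmax_le_compat; assumption.
Qed.

(* The equicontinuity of the gamma_ij makes "uniformly bounded at t" locally
   constant in t. *)
Lemma gamma_uniform_bound r : 0 <= r -> exists B, forall i j, In j (Ii i) -> gamma i j r <= B.
Proof.
  destruct Hg as (_ & _ & Hequi & _). revert r.
  apply (Rplus_downward_locally_constant
    (fun r => exists B, forall i j, In j (Ii i) -> gamma i j r <= B)).
  - exists 0. intros i j Hj. destruct (gamma_Kinf i j Hj) as [[_ [-> _]] _]. lra.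
  - intros t1 t2 H1 H12 [B HB]. exists B. intros i j Hj.
    eapply Rle_trans; [|apply (HB i j Hj)]. apply Kinf_le; auto. apply gamma_Kinf, Hj.
  - intros t Ht. destruct (Hequi t Ht 1 Rlt_0_1) as [d [Hd Hcd]]. exists d; split; auto.
    intros t' Ht' Htt'. split; intros [B HB]; exists (B + 1); intros i j Hj;
      specialize (Hcd i j t' Hj Ht' Htt'); apply Rabs_def2 in Hcd; specialize (HB i j Hj); lra.
Qed.

(* (M4) bounds each step of the chain 0, v/N, 2v/N, ..., v by 1. *)
Lemma mu_restrict_box_bound B : 0 <= B -> exists C, forall i v,
  (forall j, 0 <= v j <= B) -> real (mu i (restrict (Ii i) v)) <= C.
Proof.
  intros HB. destruct Hg as (_ & _ & _ & _ & [xi [_ HM1]] & _ & _ & HM4).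
  set (box := fun v : I -> R => forall j, 0 <= v j <= B).
  assert (box_linf_pos : forall v, box v -> linf_pos v).
  { intros v Hv. split; [intros j; apply Hv|]. exists B. intros j.
    specialize (Hv j). rewrite Rabs_pos_eq; lra. }
  destruct (HM4 box box_linf_pos) with (eps := 1) as [d [Hd Hstep]]; [|lra|].
  { exists B. intros v Hv. apply (linf_norm_le_of_nonneg HI); auto. }
  destruct (INR_archimed d B Hd) as [n Hn].
  set (N := INR (S n)). assert (HN : 0 < N) by apply lt_0_INR, Nat.lt_0_succ.
  assert (HBN : 1 / N * B <= d).
  { replace (1 / N * B) with (B / N) by (field; lra). apply Rle_div_l; [exact HN|].
    unfold N. rewrite S_INR. lra. }
  exists (INR (S n) * 1). intros i v Hv.
  set (w := fun k : nat => vscale (INR k / N) v).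
  assert (Hw : forall k, (k <= S n)%nat -> box (w k)).
  { intros k Hk. unfold box, w. apply vscale_box; [exact Hv|split].
    - apply Rdiv_le_0_compat; [apply pos_INR|exact HN].
    - apply (Rdiv_le_1 _ N HN), le_INR, Hk. }
  replace v with (w (S n)) by (apply functional_extensionality; intros j;
    unfold w, vscale; rewrite Rdiv_diag by lra; ring).
  apply (bounded_increments_le (fun k => real (mu i (restrict (Ii i) (w k))))).
  - replace (restrict (Ii i) (w O)) with (@vzero I).
    + rewrite (proj1 (HM1 i)). simpl; lra.
    + apply functional_extensionality; intros j. unfold restrict, w, vscale, vzero. simpl.
      destruct (excluded_middle_informative _); lra.
  - intros k Hk.
    assert (Hinc : INR (S k) / N - INR k / N = 1 / N) by (rewrite S_INR; field; lra).
    assert (Hdiff : linf_norm (vsub (w (S k)) (w k)) <= d).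
    { eapply Rle_trans; [apply (linf_norm_vscale_sub HI v B); auto|].
      - assert (0 < 1 / N) by (apply Rdiv_lt_0_compat; lra). lra.
      - rewrite Hinc. exact HBN. }
    pose proof (Hstep (w k) (w (S k)) (Hw k ltac:(lia)) (box_linf_pos _ (Hw (S k) Hk))
      Hdiff i) as Hki.
    apply Rabs_le_between in Hki. lra.
Qed.

Lemma Gamma_linf_pos s : linf_pos s -> linf_pos (Gam s).
Proof.
  intros [Hs0 [Cs HCs]].
  destruct (gamma_uniform_bound (Rmax Cs 0) (Rmax_r Cs 0)) as [B0 HB0].
  destruct (mu_restrict_box_bound (Rmax B0 0) (Rmax_r B0 0)) as [C HC].
  split; [intros i; apply Gamma_nonneg; auto|]. exists C. intros i.
  rewrite Rabs_pos_eq by (apply Gamma_nonneg; auto).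
  change (real (mu i (gain_input i s)) <= C).
  unfold gain_input. rewrite <- restrict_idem. apply HC. intros j.
  split; [apply (gain_input_linf_pos i s Hs0)|].
  unfold restrict. destruct (excluded_middle_informative (In j (Ii i))) as [Hj|];
    [|apply Rmax_r].
  eapply Rle_trans; [|apply Rmax_l]. eapply Rle_trans; [|apply (HB0 i j Hj)].
  apply Kinf_le; auto; [apply (gamma_Kinf i j Hj)|].
  specialize (HCs j). pose proof (Rle_abs (s j)). pose proof (Rmax_l Cs 0). lra.
Qed.

Lemma Gamma_hat_linf_pos s : linf_pos s -> linf_pos (Ghat s).
Proof.
  intros Hs. pose proof (Gamma_linf_pos s Hs) as [HG0 [CG HCG]]. destruct Hs as [Hs0 [Cs HCs]].
  split.
  - intros i. eapply Rle_trans; [apply Hs0|apply Gamma_hat_ge].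
  - exists (Rmax Cs CG). intros i.
    specialize (Hs0 i). specialize (HCs i). specialize (HCG i). specialize (HG0 i).
    rewrite Rabs_pos_eq in HCs, HCG by assumption.
    rewrite Rabs_pos_eq by (eapply Rle_trans; [exact Hs0|apply Rmax_l]).
    apply Rmax_le_compat; assumption.
Qed.

Lemma Gamma_seq_cont i s (x : nat -> I -> R) :
  (forall j, 0 <= s j) -> (forall n j, 0 <= x n j) ->
  (forall j d, 0 < d -> exists N, forall m, (N <= m)%nat -> Rabs (x m j - s j) < d) ->
  forall eps, 0 < eps -> exists n, Rabs (Gam (x n) i - Gam s i) < eps.
Proof.
  intros Hs Hx Hcv eps Heps. destruct Hg as (_ & _ & _ & _ & _ & _ & HM3 & _).
  destruct (proj2 (HM3 i (Ii i)) _ (gain_input_linf_pos i s Hs)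
    (restrict_vanishes_off _ _) eps Heps) as [d [Hd Hmu]].
  destruct (eventually_forall_In (Ii i)
    (fun j m => Rabs (gamma i j (x m j) - gamma i j (s j)) < d / 2)) as [N HN].
  { intros j Hj. destruct (gamma_Kinf i j Hj) as [[Hcont _] _].
    destruct (Hcont (s j) (Hs j) (d / 2) ltac:(lra)) as [dj [Hdj Hcj]].
    destruct (Hcv j dj Hdj) as [Nj HNj]. exists Nj. intros m Hm. apply Hcj; auto. }
  exists N. apply (Hmu _ (gain_input_linf_pos i (x N) (Hx N))
    (restrict_vanishes_off _ _)).
  apply Rle_lt_trans with (d / 2); [|lra]. apply (linf_norm_le_bound HI); auto.
  intros j. unfold vsub, gain_input, restrict.
  destruct (excluded_middle_informative (In j (Ii i))) as [Hj|].
  - left; apply HN; auto.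
  - rewrite Rminus_0_r, Rabs_R0; lra.
Qed.

Lemma cofinal_Psi_UGS : uniformly_cofinal (Psi Gam) -> UGS Ghat.
Proof.
  intros [phi [Hphi Hcof]]. exists phi; split; auto.
  intros s Hs n. destruct (Hcof s Hs) as [sh [[Hsh Hdecay] [Hle Hnorm]]].
  assert (Hiter_nonneg : forall n j, 0 <= Nat.iter n Ghat s j).
  { intros m j. pose proof (iter_Gamma_hat_ge Ii gamma mu s m j). pose proof (proj1 Hs j). lra. }
  assert (Hbelow : forall m, vle (Nat.iter m Ghat s) sh).
  { intros m. induction m as [|m IH]; simpl; auto. intros i. apply Rmax_lub; auto.
    eapply Rle_trans; [|apply (Hdecay i)]. apply Gamma_mono; auto. }
  eapply Rle_trans; [|exact Hnorm]. apply (linf_norm_le_of_nonneg HI). intros i.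
  split; auto. eapply Rle_trans; [apply Hbelow|]. apply (linf_pos_le_norm HI); auto.
Qed.

Definition orbit r n : I -> R := Nat.iter n Ghat (vscale r ones).

Definition orbit_sup r i : R := seq_sup (fun n => orbit r n i).

Lemma orbit_linf_pos r n : 0 <= r -> linf_pos (orbit r n).
Proof.
  intros Hr. induction n as [|n IH]; simpl; [apply linf_pos_const, Hr|].
  apply Gamma_hat_linf_pos, IH.
Qed.

Lemma orbit_ge r n i : r <= orbit r n i.
Proof.
  eapply Rle_trans; [|apply iter_Gamma_hat_ge]. unfold vscale, ones; lra.
Qed.

Lemma orbit_succ r n i : orbit r n i <= orbit r (S n) i.
Proof. apply Gamma_hat_ge. Qed.

Lemma Gamma_orbit_le r n i : Gam (orbit r n) i <= orbit r (S n) i.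
Proof. apply Rmax_r. Qed.

Lemma orbit_mono r1 r2 n : 0 <= r1 -> r1 <= r2 -> vle (orbit r1 n) (orbit r2 n).
Proof.
  intros H1 H12. induction n as [|n IH]; simpl.
  - intros i; unfold vscale, ones; lra.
  - apply Gamma_hat_mono; auto. apply orbit_linf_pos, H1.
Qed.

Section UGSBound.

Variable phi : R -> R.
Hypothesis Hphi : forall s, linf_pos s -> forall n,
  linf_norm (Nat.iter n Ghat s) <= phi (linf_norm s).

Lemma orbit_le_phi r n i : 0 <= r -> orbit r n i <= phi r.
Proof.
  intros Hr. rewrite <- (linf_norm_const HI r Hr) at 2.
  eapply Rle_trans; [|apply Hphi, linf_pos_const, Hr].
  apply (linf_pos_le_norm HI), orbit_linf_pos, Hr.
Qed.

Lemma orbit_sup_ub r n i : 0 <= r -> orbit r n i <= orbit_sup r i.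
Proof.
  intros Hr. apply (seq_sup_ub (fun m => orbit r m i) (phi r)).
  intros m; apply orbit_le_phi, Hr.
Qed.

Lemma orbit_sup_le r i b : 0 <= r -> (forall n, orbit r n i <= b) -> orbit_sup r i <= b.
Proof.
  intros Hr. apply (seq_sup_le (fun m => orbit r m i) (phi r)).
  intros m; apply orbit_le_phi, Hr.
Qed.

Lemma orbit_sup_ge r i : 0 <= r -> r <= orbit_sup r i.
Proof. intros Hr. eapply Rle_trans; [apply (orbit_ge r O)|apply orbit_sup_ub, Hr]. Qed.

Lemma orbit_sup_le_phi r i : 0 <= r -> orbit_sup r i <= phi r.
Proof. intros Hr. apply orbit_sup_le; auto. intros n; apply orbit_le_phi, Hr. Qed.

Lemma orbit_sup_decay r i : 0 <= r -> Gam (orbit_sup r) i <= orbit_sup r i.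
Proof.
  intros Hr. apply Rnot_lt_le. intros Hlt.
  assert (Hsup0 : forall j, 0 <= orbit_sup r j).
  { intros j. pose proof (orbit_sup_ge r j Hr). lra. }
  destruct (Gamma_seq_cont i (orbit_sup r) (orbit r) Hsup0
    (fun n => proj1 (orbit_linf_pos r n Hr))
    (fun j => seq_sup_cv_incr _ (phi r) (fun n => orbit_le_phi r n j Hr)
                (fun n => orbit_succ r n j))
    (Gam (orbit_sup r) i - orbit_sup r i) ltac:(lra)) as [n Hn].
  apply Rabs_def2 in Hn.
  pose proof (Gamma_orbit_le r n i). pose proof (orbit_sup_ub r (S n) i Hr). lra.
Qed.

End UGSBound.

Lemma UGS_increasing_decay_path :
  UGS Ghat -> exists sigma, bounded_decay_path Gam sigma /\ increasing_path sigma.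
Proof.
  intros [phi [Hphi HU]]. exists orbit_sup. split; [split|].
  - intros r Hr. split; [split|].
    + intros j. pose proof (orbit_sup_ge phi HU r j Hr). lra.
    + exists (phi r). intros j. pose proof (orbit_sup_ge phi HU r j Hr).
      rewrite Rabs_pos_eq by lra. apply (orbit_sup_le_phi phi HU), Hr.
    + intros i. apply (orbit_sup_decay phi HU), Hr.
  - exists (fun r => r), phi. split; [apply Kinf_id|split; auto].
    intros r Hr. split; intros i; unfold vscale, ones; rewrite Rmult_1_r.
    + apply (orbit_sup_ge phi HU), Hr.
    + apply (orbit_sup_le_phi phi HU), Hr.
  - intros r1 r2 H1 H12 i. apply (orbit_sup_le phi HU); auto. intros n.
    eapply Rle_trans; [apply orbit_mono; eauto|]. apply (orbit_sup_ub phi HU); lra.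
Qed.

End GainOperator.

Lemma decay_path_cofinal {I : Type} (HI : inhabited I) (T : (I -> R) -> I -> R) sigma :
  bounded_decay_path T sigma -> uniformly_cofinal (Psi T).
Proof.
  intros [Hdecay [pmin [pmax [Hmin [Hmax Hbounds]]]]].
  destruct (Kinf_inverse pmin Hmin) as [h [Hh Hinv]].
  exists (fun t => pmax (h t)); split; [apply Kinf_comp; auto|].
  intros s Hs. pose proof (linf_norm_nonneg HI s (proj2 Hs)) as Hn0.
  destruct (Hinv _ Hn0) as [Hr Hpr]. set (r := h (linf_norm s)) in *.
  exists (sigma r). destruct (Hbounds r Hr) as [Hlo Hhi].
  split; [apply Hdecay, Hr|split].
  - intros i. eapply Rle_trans; [|apply Hlo]. unfold vscale, ones. rewrite Hpr, Rmult_1_r.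
    apply (linf_pos_le_norm HI); auto.
  - apply (linf_norm_le_of_nonneg HI). intros i. specialize (Hlo i). specialize (Hhi i).
    unfold vscale, ones in *. rewrite Rmult_1_r in *.
    pose proof (Kinf_nonneg pmin r Hmin Hr). lra.
Qed.

Theorem proposition2p13 (I : Type) (HIc : countable_index I) (HIne : inhabited I)
    (Ii : I -> list I) (gamma : I -> I -> R -> R) (mu : I -> (I -> R) -> Rbar)
    (Hgain : gain_operator_data Ii gamma mu) :
  let G := Gamma_op Ii gamma mu in
  let Ghat := Gamma_hat Ii gamma mu in
  (UGS Ghat <->
     exists sigma : R -> I -> R, bounded_decay_path G sigma /\ increasing_path sigma) /\
  (UGS Ghat <-> exists sigma : R -> I -> R, bounded_decay_path G sigma) /\
  (UGS Ghat <-> uniformly_cofinal (Psi G)).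
Proof.
  intros G Ghat.
  pose proof (UGS_increasing_decay_path I HIne Ii gamma mu Hgain) as a_b.
  pose proof (cofinal_Psi_UGS I HIne Ii gamma mu Hgain) as d_a.
  assert (c_a : forall sigma, bounded_decay_path G sigma -> UGS Ghat)
    by (intros sigma Hsigma; apply d_a, (decay_path_cofinal HIne G sigma Hsigma)).
  split; [|split]; split.
  - exact a_b.
  - intros [sigma [Hsigma _]]. exact (c_a sigma Hsigma).
  - intros Ha. destruct (a_b Ha) as [sigma [Hsigma _]]. eauto.
  - intros [sigma Hsigma]. exact (c_a sigma Hsigma).
  - intros Ha. destruct (a_b Ha) as [sigma [Hsigma _]].
    exact (decay_path_cofinal HIne G sigma Hsigma).
  - exact d_a.
Qed.
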